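(* Assume $\mathfrak{c} = 2^{<\mathfrak{c}}$, where $\mathfrak{c}=|\mathbb{R}|$ and $2^{<\mathfrak{c}} = \sup\{2^\lambda : \lambda<\mathfrak{c}\ \text{a cardinal}\}$. Then there is a family $\{ f_\nu : \nu < 2^{\mathfrak{c}} \}$ of two-point selections on $\mathbb{R}$ such that $\mathcal{B}_{f_\mu}(\mathbb{R}) \neq \mathcal{B}_{f_\nu}(\mathbb{R})$ for all distinct $\mu, \nu < 2^{\mathfrak{c}}$.
   Context: For a set $X$, $[X]^2$ is the set of two-element subsets of $X$. A two-point selection on $X$ is a function $f:[X]^2\to X$ with $f(F)\in F$ for all $F\in[X]^2$. For a two-point selection $f$ on $X$ and distinct $r,s\in X$, write $r<_f s$ if $f(\{r,s\})=r$. Put $(\leftarrow,r)_f=\{x\in X: x<_f r\}$ and $(r,\rightarrow)_f=\{x\in X: r<_f x\}$. The topology $\tau_f$ on $X$ is the topology generated (as a subbase) by all sets $(\leftarrow,r)_f$ and $(r,\rightarrow)_f$, $r\in X$. For $X=\mathbb{R}$, $\mathcal{B}_f(\mathbb{R})$ denotes the Borel $\sigma$-algebra of $(\mathbb{R},\tau_f)$, i.e. the $\sigma$-algebra generated by $\tau_f$. *)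

From HB Require Import structures.
From mathcomp Require Import all_boot all_order.
From mathcomp Require Import classical_sets cardinality measurable_structure.
From Stdlib Require Import Reals.
Set Implicit Arguments.
Unset Strict Implicit.
Unset Printing Implicit Defensive.
Local Open Scope classical_set_scope.

Notation RR := Rdefinitions.R.

Definition two_subset {X : Type} (F : set X) : Prop :=
  exists r s : X, r <> s /\ F = [set r; s].

(* We represent it as a function on all subsets, only constrained on [X]^2
   (its values elsewhere are irrelevant to every notion below). *)
Definition two_point_selection {X : Type} (f : set X -> X) : Prop :=
  forall F : set X, two_subset F -> F (f F).

Definition sel_lt {X : Type} (f : set X -> X) (r s : X) : Prop :=
  r <> s /\ f [set r; s] = r.

Definition sel_left_ray {X : Type} (f : set X -> X) (r : X) : set X :=
  [set x | sel_lt f x r].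
Definition sel_right_ray {X : Type} (f : set X -> X) (r : X) : set X :=
  [set x | sel_lt f r x].

Definition sel_subbase {X : Type} (f : set X -> X) : set (set X) :=
  [set U | exists r, U = sel_left_ray f r \/ U = sel_right_ray f r].

Definition generated_topology {X : Type} (S : set (set X)) : set (set X) :=
  [set U | forall x, U x ->
     exists s : seq (set X), (forall V, V \in s -> S V) /\
        (forall V, V \in s -> V x) /\
        (forall y, (forall V, V \in s -> V y) -> U y)].

Definition tau_sel {X : Type} (f : set X -> X) : set (set X) :=
  generated_topology (sel_subbase f).

Definition borel_sel {X : Type} (f : set X -> X) : set (set X) :=
  smallest (sigma_algebra setT) (tau_sel f).

(* Fix a bijection between R and R * (R * bool), so that R is a disjoint union
   of blocks {y} * R * bool.  For nu ⊆ R, order R lexicographically by blocks,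
   and inside the block of y either as two consecutive copies of R, all
   (u, false) before all (v, true), when y ∈ nu, or as the double arrow
   (u, false) < (u, true) < (v, false) for u < v, when y ∉ nu; f_nu picks the
   smaller point of a pair, so tau_{f_nu} is the order topology.
   For y ∈ nu the false half {(y, u, false)} of the block is open.  For y ∉ nu,
   an open set containing (u, false) contains (v, true) for all v slightly
   below u, and one containing (u, true) contains (v, false) for all v
   slightly above u; choosing rationals in these intervals shows that an open
   set separates (u, false) from (u, true) for countably many u only.  Sets
   with this property form a sigma-algebra, hence include all Borel sets, yet
   the false half separates every such pair. *)

From mathcomp Require Import all_boot all_order all_algebra.
From mathcomp Require Import classical_sets boolp functions cardinality filter.
From mathcomp Require Import measurable_structure measure lebesgue_measure.
From mathcomp Require Import reals Rstruct Rstruct_topology constructive_ereal.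
From mathcomp Require Import lra.
From Stdlib Require Import Reals.
Import Order.TTheory GRing.Theory Num.Theory.
Local Open Scope classical_set_scope.
Local Open Scope ring_scope.
Local Open Scope card_scope.

Lemma RR_uncountable : ~ countable [set: RR].
Proof.
move=> /countable_lebesgue_measure0 RR0.
have := @le_measure _ _ _ (@lebesgue_measure RR) `[0, 1]%classic setT.
rewrite /= RR0 lebesgue_measure_itv /= lte_fin ltr01 oppr0 adde0 lee_fin ler10.
move=> le10; suff : false by [].
by apply: le10 => //; rewrite inE //; exact: measurable_itv.
Qed.

Definition rat_cut (x : RR) : set rat := [set q | ratr q < x].

Lemma rat_cut_inj : injective rat_cut.
Proof.
suff lt_neq x y : x < y -> rat_cut x <> rat_cut y.
  by move=> x y exy; case: (ltgtP x y) => [/lt_neq|/lt_neq|] //; rewrite exy.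
move=> /rat_in_itvoo[q]; rewrite in_itv /= => /andP[xq qy].
move=> /(congr1 (fun S => S q)); rewrite /rat_cut /= => eq_q.
by move: qy; rewrite -eq_q ltNge ltW.
Qed.

Definition small_powersets_le_c : Prop :=
  forall A : set RR, (A #<= [set: RR]) -> ~ ([set: RR] #<= A) ->
    [set B : set RR | B `<=` A] #<= [set: RR].

Lemma powerset_inj_RR (T : countType) : small_powersets_le_c ->
  exists beta : set T -> RR, injective beta.
Proof.
move=> c_powerset; pose e (t : T) : RR := (pickle t)%:R.
have e_inj : injective e.
  by move=> s t /eqP; rewrite eqr_nat => /eqP /(pcan_inj pickleK).
have e_countable : countable (range e).
  exact: card_le_trans (card_image_le _ _) (countableP _).
have RR_not_le : ~ ([set: RR] #<= range e).
  by move=> RRe; apply: RR_uncountable; exact: card_le_trans RRe e_countable.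
have /pcard_injP[iota iota_inj] := c_powerset _ (card_leT _) RR_not_le.
exists (fun B => iota (e @` B)) => B B' /iota_inj eB.
have {}eB : e @` B = e @` B' by apply: eB; rewrite inE => _ [t _ <-]; exists t.
by apply/funext => t; rewrite -(image_inj e_inj) eB image_inj.
Qed.

Definition rat_code (t : RR * (RR * bool)) : set (rat + (rat + unit)) :=
  [set c | match c with
           | inl q => ratr q < t.1
           | inr (inl q) => ratr q < t.2.1
           | inr (inr _) => t.2.2
           end].

Lemma rat_code_inj : injective rat_code.
Proof.
move=> [p [u i]] [p' [u' i']] e.
have ep : rat_cut p = rat_cut p'.
  by apply/funext => q; exact: (congr1 (fun S => S (inl q)) e).
have eu : rat_cut u = rat_cut u'.
  by apply/funext => q; exact: (congr1 (fun S => S (inr (inl q))) e).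
have ei : (i : Prop) = i' := congr1 (fun S => S (inr (inr tt))) e.
move: ep eu => /rat_cut_inj-> /rat_cut_inj->; congr (_, (_, _)).
by apply/idP/idP; rewrite ei.
Qed.

Lemma bijective_triple_RR : small_powersets_le_c ->
  exists h : RR * (RR * bool) -> RR, bijective h.
Proof.
move=> c_powerset.
have [beta beta_inj] := powerset_inj_RR (rat + (rat + unit))%type c_powerset.
have le_RR : [set: RR * (RR * bool)] #<= [set: RR].
  apply/pcard_injP; exists (beta \o rat_code).
  by move=> s t _ _ /beta_inj/rat_code_inj.
have ge_RR : [set: RR] #<= [set: RR * (RR * bool)].
  by apply/pcard_injP; exists (fun x => (x, (0, false))) => x y _ _ [].
have /card_set_bijP[h] := Cantor_Bernstein le_RR ge_RR.
by rewrite setTT_bijective; exists h.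
Qed.

Section MinSelection.
Context {d : Order.disp_t} {X : pointedType} {T : orderType d} (k : X -> T).

Definition min_sel (F : set X) : X :=
  get [set x | F x /\ forall z, F z -> (k x <= k z)%O].

Lemma min_sel_pair r s : r <> s ->
  [set r; s] (min_sel [set r; s]) /\
  forall z, [set r; s] z -> (k (min_sel [set r; s]) <= k z)%O.
Proof.
move=> rs; apply: (xgetPex point (P := [set x | [set r; s] x /\ _])).
case: (leP (k r) (k s)) => [krs|ksr]; [exists r|exists s].
  by split=> [|z [->|->]]; [left|..].
by split=> [|z [->|->] //]; [right|exact: ltW].
Qed.

Lemma min_sel_two_point : two_point_selection min_sel.
Proof. by move=> F [r [s [rs ->]]]; case: (min_sel_pair _ _ rs). Qed.

Hypothesis k_inj : injective k.

Lemma sel_lt_min_sel r s : sel_lt min_sel r s <-> (k r < k s)%O.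
Proof.
split=> [[rs min_r]|krs].
  have [_ /(_ s (or_intror erefl))] := min_sel_pair _ _ rs.
  by rewrite min_r lt_neqAle (inj_eq k_inj) => ->; rewrite andbT; apply/eqP.
have rs : r <> s by move=> rs; rewrite rs ltxx in krs.
split=> //; have [[//|min_s] /(_ r (or_introl erefl))] := min_sel_pair _ _ rs.
by rewrite min_s leNgt krs.
Qed.

End MinSelection.

Lemma generated_topology_filter {X} (S : set (set X)) (F : set_system X)
    {FF : Filter F} x :
  (forall V, S V -> V x -> F V) ->
  forall U, generated_topology S U -> U x -> F U.
Proof.
move=> FS U /[apply] -[s [sS [sx sU]]]; apply: filterS sU _.
elim: s sS sx => [|V s IH] sS sx; first by apply: filterS filterT => y _ W.
have FV : F V by apply: FS; [apply: sS|apply: sx]; exact: mem_head.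
have s_sub : {subset s <= V :: s} by move=> W sW; rewrite inE sW orbT.
have Fs := IH (fun W sW => sS W (s_sub W sW)) (fun W sW => sx W (s_sub W sW)).
apply: filterS (filterI FV Fs) => y [Vy sy] W.
by rewrite inE => /orP[/eqP->|/sy].
Qed.

Lemma countableU {T} (A B : set T) :
  countable A -> countable B -> countable (A `|` B).
Proof.
by move=> cA cB; rewrite -bigcup2E; apply: bigcup_countable => // -[|[|]].
Qed.

Definition disagreement {I X} (a b : I -> X) (A : set X) : set I :=
  [set i | ~ (A (a i) <-> A (b i))].

Lemma sigma_algebra_countable_disagreement {I X} (a b : I -> X) :
  sigma_algebra setT [set A | countable (disagreement a b A)].
Proof.
split=> [|A|A cA] /=.
- by apply: sub_countable (subset_card_le _) (countable0 _) => i /=; apply; split.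
- move=> cA; apply: sub_countable (subset_card_le _) cA => i /= dAi A_ab.
  by apply: dAi; split=> -[_ nA]; split=> // Ai; apply: nA; apply A_ab.
- apply: sub_countable (subset_card_le _)
    (bigcup_countable (countableP [set: nat]) (fun n _ => cA n)).
  move=> i dAi; apply: contrapT => no_dAn; apply: dAi.
  have A_ab n : A n (a i) <-> A n (b i).
    by apply: contrapT => dAn; apply: no_dAn; exists n.
  by split=> -[n _ An]; exists n => //; apply A_ab.
Qed.

Lemma countable_left_isolated (P Q : set RR) :
  (forall u, P u -> exists2 L, L < u & forall v, L < v < u -> Q v) ->
  countable (P `\` Q).
Proof.
move=> PQ.
(* u ↦ a rational in (L, u) is injective on P `\` Q: if u < w share q, then
   u ∈ (q, w) ⊆ Q. *)
have /choice[f fP] : forall u, exists q : rat,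
    P u -> ratr q < u /\ forall v, ratr q < v < u -> Q v.
  move=> u; have [Pu|nPu] := pselect (P u); last by exists 0.
  have [L Lu LQ] := PQ u Pu; have [q] := rat_in_itvoo Lu.
  rewrite in_itv /= => /andP[Lq qu]; exists q => _; split=> // v /andP[qv vu].
  by apply: LQ; rewrite vu (lt_trans Lq qv).
apply/countable_injP; exists (pickle \o f).
move=> u w /set_mem[Pu nQu] /set_mem[Pw nQw] /= /(pcan_inj pickleK) fuw.
have [uw|wu|//] := ltgtP u w.
- by case: nQu; apply: (fP w Pw).2; rewrite uw -fuw (fP u Pu).1.
- by case: nQw; apply: (fP u Pu).2; rewrite wu fuw (fP w Pw).1.
Qed.

Lemma countable_right_isolated (P Q : set RR) :
  (forall u, P u -> exists2 H, u < H & forall v, u < v < H -> Q v) ->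
  countable (P `\` Q).
Proof.
move=> PQ.
have cN : countable ([set u | P (- u)] `\` [set u | Q (- u)]).
  apply: countable_left_isolated => u /PQ[H uH HQ]; exists (- H); first lra.
  by move=> v /andP[Hv vu]; apply: HQ; apply/andP; split; lra.
apply: sub_countable (subset_card_le _) (card_le_trans (card_image_le -%R _) cN).
by move=> u PQu; exists (- u); rewrite /= ?opprK.
Qed.

Definition left_approach {X} (b : RR -> X) (u : RR) : set_system X :=
  [set W | exists2 L, L < u & forall v, L < v < u -> W (b v)].

Definition right_approach {X} (a : RR -> X) (u : RR) : set_system X :=
  [set W | exists2 H, u < H & forall v, u < v < H -> W (a v)].

Lemma left_approach_filter {X} (b : RR -> X) u : Filter (left_approach b u).
Proof.
split=> [|W W' [L Lu LW] [L' L'u L'W]|W W' WW' [L Lu LW]].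
- by exists (u - 1) => //; lra.
- exists (Order.max L L') => [|v]; first by rewrite gt_max Lu L'u.
  by rewrite gt_max => /andP[/andP[Lv L'v] vu]; split; [apply: LW|apply: L'W];
    rewrite ?Lv ?L'v.
- by exists L => // v /LW /WW'.
Qed.

Lemma right_approach_filter {X} (a : RR -> X) u : Filter (right_approach a u).
Proof.
split=> [|W W' [H uH HW] [H' uH' H'W]|W W' WW' [H uH HW]].
- by exists (u + 1) => //; lra.
- exists (Order.min H H') => [|v]; first by rewrite lt_min uH uH'.
  by rewrite lt_min => /andP[uv /andP[vH vH']]; split; [apply: HW|apply: H'W];
    rewrite ?uv.
- by exists H => // v /HW /WW'.
Qed.

(* Booleans are read as 0 < 1, so that both kinds of blocks share one
   lexicographic type. *)
Definition lex_key (nu : set RR) (t : RR * (RR * bool)) : RR *l (RR *l RR) :=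
  (t.1, if `[< nu t.1 >] then (t.2.2%:R, t.2.1) else (t.2.1, t.2.2%:R)).

Lemma lex_key_inj nu : injective (lex_key nu).
Proof.
have natr_bool_inj (i j : bool) : i%:R = j%:R :> RR -> i = j.
  by move=> /eqP; rewrite eqr_nat; case: i j => -[].
move=> [p [u i]] [p' [u' i']] [<-]; case: asboolP => _ [].
  by move=> /natr_bool_inj-> ->.
by move=> -> /natr_bool_inj->.
Qed.

Section BlockOrder.
Context {nu : set RR} {y : RR}.

Lemma lex_key_between_false {t u v} : nu y ->
  (lex_key nu (y, (u, false)) < lex_key nu t)%O ->
  (lex_key nu t < lex_key nu (y, (v, false)))%O ->
  exists w, t = (y, (w, false)).
Proof.
move: t => [p [w i]] nuy; rewrite /lex_key /= !ltxi_pair.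
move=> /andP[yp /implyP ut] /andP[py /implyP tv].
have {yp py} ep : p = y by apply/le_anti; rewrite py yp.
subst p; move: ut tv; rewrite asboolT // lexx => /(_ isT) + /(_ isT).
rewrite !ltxi_pair => /andP[i_ge0 _] /andP[i_le0 _].
by exists w; case: i i_ge0 i_le0 => //=; rewrite ler10.
Qed.

Hypothesis nny : ~ nu y.

Lemma lex_key_true_lt_false {u v} : u < v ->
  (lex_key nu (y, (u, true)) < lex_key nu (y, (v, false)))%O.
Proof.
by move=> uv; rewrite /lex_key /= asboolF // !ltxi_pair lexx ltW //= leNgt uv.
Qed.

Lemma lex_key_lt_false {t u} : (lex_key nu t < lex_key nu (y, (u, false)))%O ->
  exists2 L, L < u & forall v, L < v < u ->
    (lex_key nu t < lex_key nu (y, (v, true)))%O.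
Proof.
move: t => [p [w i]]; rewrite /lex_key /= ltxi_pair => /andP[py].
case: (ltgtP p y) py => [py _ _|//|-> _].
  exists (u - 1) => [|v _]; first lra.
  by rewrite ltxi_pair (ltW py) /= leNgt py.
rewrite asboolF //= ltxi_pair => /andP[wu /implyP uw_neg].
have {uw_neg} {}wu : w < u.
  rewrite lt_neqAle wu andbT; apply/eqP => ewu.
  by move: uw_neg; rewrite ewu lexx ltNge ler0n => /(_ isT).
exists w => // v /andP[wv _].
by rewrite ltxi_pair lexx /= ltxi_pair (ltW wv) /= leNgt wv.
Qed.

Lemma lex_key_true_lt {t u} : (lex_key nu (y, (u, true)) < lex_key nu t)%O ->
  exists2 H, u < H & forall v, u < v < H ->
    (lex_key nu (y, (v, false)) < lex_key nu t)%O.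
Proof.
move: t => [p [w i]]; rewrite /lex_key /= ltxi_pair => /andP[yp].
case: (ltgtP y p) yp => [yp _ _|//|<- _].
  exists (u + 1) => [|v _]; first lra.
  by rewrite ltxi_pair (ltW yp) /= leNgt yp.
rewrite asboolF //= ltxi_pair => /andP[uw /implyP wu_neg].
have {wu_neg} {}uw : u < w.
  rewrite lt_neqAle uw andbT; apply/eqP => euw.
  by move: wu_neg; rewrite euw lexx => /(_ isT); case: i; rewrite ?ltxx ?ltr10.
exists w => // v /andP[_ vw].
by rewrite ltxi_pair lexx /= ltxi_pair (ltW vw) /= leNgt vw.
Qed.

End BlockOrder.

Section Construction.
Variables (h : RR * (RR * bool) -> RR) (g : RR -> RR * (RR * bool)).
Hypotheses (hK : cancel h g) (gK : cancel g h).

Definition block_sel (nu : set RR) : set RR -> RR := min_sel (lex_key nu \o g).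

Lemma block_sel_lt nu s t :
  sel_lt (block_sel nu) (h s) (h t) <-> (lex_key nu s < lex_key nu t)%O.
Proof.
rewrite sel_lt_min_sel /= ?hK //.
exact: inj_comp (@lex_key_inj nu) (can_inj gK).
Qed.

Definition block_half y i u := h (y, (u, i)).

Lemma open_block_half_false {nu y} :
  nu y -> tau_sel (block_sel nu) (range (block_half y false)).
Proof.
move=> nuy _ [w _ <-]; rewrite /block_half.
exists [:: sel_right_ray (block_sel nu) (h (y, (w - 1, false)));
          sel_left_ray (block_sel nu) (h (y, (w + 1, false)))].
split; [|split] => [V|V|x x_between].
- by rewrite !inE => /orP[]/eqP->; eexists; [right|left].
- rewrite !inE => /orP[]/eqP->;
  rewrite /sel_right_ray /sel_left_ray /= block_sel_lt;
  by rewrite /lex_key /= asboolT // !ltxi_pair !lexx /=; lra.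
have := x_between _ (mem_head _ _).
have : sel_left_ray (block_sel nu) (h (y, (w + 1, false))) x.
  by apply: x_between; rewrite !inE eqxx orbT.
rewrite /sel_right_ray /sel_left_ray /= -[x]gK !block_sel_lt => hi lo.
have [u gx] := lex_key_between_false nuy lo hi.
by exists u => //; rewrite /block_half -gx gK.
Qed.

Lemma subbase_left_approach {nu y} u : ~ nu y ->
  forall V, sel_subbase (block_sel nu) V -> V (block_half y false u) ->
  left_approach (block_half y true) u V.
Proof.
move=> nny V [r [->|->]];
  rewrite /sel_left_ray /sel_right_ray /left_approach /block_half /= -[r]gK.
- rewrite block_sel_lt => ray; exists (u - 1) => [|v /andP[_ vu]]; first lra.
  by rewrite /= block_sel_lt; apply: lt_trans (lex_key_true_lt_false nny vu) ray.
- rewrite block_sel_lt => /(lex_key_lt_false nny)[L Lu LQ].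
  by exists L => // v Lv; rewrite /= block_sel_lt; apply: LQ.
Qed.

Lemma subbase_right_approach {nu y} u : ~ nu y ->
  forall V, sel_subbase (block_sel nu) V -> V (block_half y true u) ->
  right_approach (block_half y false) u V.
Proof.
move=> nny V [r [->|->]];
  rewrite /sel_left_ray /sel_right_ray /right_approach /block_half /= -[r]gK.
- rewrite block_sel_lt => /(lex_key_true_lt nny)[H uH HQ].
  by exists H => // v uv; rewrite /= block_sel_lt; apply: HQ.
- rewrite block_sel_lt => ray; exists (u + 1) => [|v /andP[uv _]]; first lra.
  by rewrite /= block_sel_lt; apply: lt_trans ray (lex_key_true_lt_false nny uv).
Qed.

Lemma countable_disagreement_open {nu y} : ~ nu y ->
  forall U, tau_sel (block_sel nu) U ->
  countable (disagreement (block_half y false) (block_half y true) U).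
Proof.
move=> nny U openU.
pose Ua := block_half y false @^-1` U; pose Ub := block_half y true @^-1` U.
have sub : disagreement (block_half y false) (block_half y true) U
    `<=` (Ua `\` Ub) `|` (Ub `\` Ua).
  move=> u dU.
  have [Uau|nUau] := pselect (Ua u); have [Ubu|nUbu] := pselect (Ub u).
  + by case: dU.
  + by left.
  + by right.
  + by case: dU; split.
apply: sub_countable (subset_card_le sub) _; apply: countableU.
- apply: countable_left_isolated => u Uau.
  exact: (@generated_topology_filter _ _ _ (left_approach_filter _ u) _
    (subbase_left_approach u nny)) openU Uau.
- apply: countable_right_isolated => u Ubu.
  exact: (@generated_topology_filter _ _ _ (right_approach_filter _ u) _
    (subbase_right_approach u nny)) openU Ubu.
Qed.

Lemma block_half_false_not_borel {nu y} : ~ nu y ->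
  ~ borel_sel (block_sel nu) (range (block_half y false)).
Proof.
move=> nny borel_y.
have c_dis := smallest_sub (sigma_algebra_countable_disagreement _ _)
  (countable_disagreement_open nny) borel_y.
apply: RR_uncountable; apply: sub_countable (subset_card_le _) c_dis.
move=> u _ /= [+ _].
by move=> /(_ (ex_intro2 _ _ u I erefl)) [w _ /(can_inj hK)].
Qed.

Lemma borel_block_sel_neq {mu nu y} : mu y -> ~ nu y ->
  borel_sel (block_sel mu) <> borel_sel (block_sel nu).
Proof.
move=> muy nny e; apply: (block_half_false_not_borel nny); rewrite -e.
by apply: sub_sigma_algebra; exact: open_block_half_false.
Qed.

End Construction.

Theorem theorem3p6 :
  (forall A : set RR, (A #<= [set: RR]) -> ~ ([set: RR] #<= A) ->
     [set B : set RR | B `<=` A] #<= [set: RR]) ->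
  exists f : set RR -> (set RR -> RR),
    (forall nu : set RR, two_point_selection (f nu)) /\
    (forall mu nu : set RR, mu <> nu -> borel_sel (f mu) <> borel_sel (f nu)).
Proof.
move=> /bijective_triple_RR[h [g hK gK]].
exists (block_sel g); split=> [nu|mu nu mu_nu]; first exact: min_sel_two_point.
have [y mu_nu_y] : exists y, ~ (mu y <-> nu y).
  apply/existsNP => same; apply: mu_nu; apply/funext => y; exact/propext/same.
have [muy|nmuy] := pselect (mu y).
- have nnuy : ~ nu y by move=> nuy; apply: mu_nu_y.
  exact: (borel_block_sel_neq _ _ hK gK muy nnuy).
- have nuy : nu y by apply: contrapT => nnuy; apply: mu_nu_y; split.
  exact: nesym (borel_block_sel_neq _ _ hK gK nuy nmuy).
Qed.
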